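(* Let $(R,\mathfrak m)$ be a Noetherian local ring and $I,J$ ideals of $R$. Then $\operatorname{ar}_J(I)=d(\operatorname{in}(I))$.
   Context: $\operatorname{gr}_J(R)=\bigoplus_{n\ge0}J^n/J^{n+1}$ (a standard graded ring). For $0\ne f\in R$, $o(f)$ is the largest $n$ with $f\in J^n$ and $f^*$ is the class of $f$ in $J^{o(f)}/J^{o(f)+1}$; $0^*=0$; $\operatorname{in}(I)$ is the ideal of $\operatorname{gr}_J(R)$ generated by all $f^*$, $f\in I$. For a graded ideal $Q$, $d(Q)$ is the maximum degree of the elements of a minimal homogeneous generating set of $Q$. The Artin–Rees number $\operatorname{ar}_J(I)$ is the least $c$ such that $J^n\cap I=J^{n-c}(J^c\cap I)$ for all $n\ge c$. *)

(* Commutative rings are [comNzRingType]s; ideals are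
   predicates [R -> Prop]; the associated graded ring gr_J(R) is modelled
   degreewise: a homogeneous element of degree n is a pair (n, x) with
   x in J^n, standing for the class of x in J^n/J^(n+1). *)
From mathcomp Require Import all_boot all_order all_algebra.
Set Implicit Arguments. Unset Strict Implicit. Unset Printing Implicit Defensive.
Import GRing.Theory.
Local Open Scope ring_scope.

Section Defs.
Variable R : comNzRingType.
Implicit Types (A B I J M : R -> Prop).

Definition ideal A :=
  [/\ A 0, (forall x y, A x -> A y -> A (x + y)) & (forall r x, A x -> A (r * x))].

Definition seteq A B := forall x, A x <-> B x.
Definition subid A B := forall x, A x -> B x.
Definition isect A B := fun x => A x /\ B x.
Definition whole : R -> Prop := fun _ => True.

Definition prod_id A B : R -> Prop := fun x =>
  exists (k : nat) (a b : nat -> R),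
    (forall i, (i < k)%N -> A (a i) /\ B (b i)) /\ x = \sum_(i < k) a i * b i.

Fixpoint ipow J (n : nat) : R -> Prop :=
  if n is n'.+1 then prod_id J (ipow J n') else whole.

Definition gen_by (s : seq R) : R -> Prop := fun x =>
  exists r : nat -> R, x = \sum_(i < size s) r i * nth 0 s i.

Definition noetherian := forall A, ideal A -> exists s, seteq A (gen_by s).

Definition maximal_ideal M :=
  [/\ ideal M, ~ M 1 &
      forall A, ideal A -> subid M A -> ~ A 1 -> seteq A M].

Definition local_ring :=
  exists M, maximal_ideal M /\ forall M', maximal_ideal M' -> seteq M' M.

Definition ar_cond J I (c : nat) :=
  forall n, (c <= n)%N ->
    seteq (isect (ipow J n) I) (prod_id (ipow J (n - c)) (isect (ipow J c) I)).
Definition is_ar_number J I (c : nat) :=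
  ar_cond J I c /\ forall c', ar_cond J I c' -> (c <= c')%N.

Definition order_is J (f : R) (n : nat) := ipow J n f /\ ~ ipow J n.+1 f.

(* the initial forms f^*, f in I, f <> 0, as homogeneous pairs (o(f), f) *)
Definition init_forms J I : nat * R -> Prop := fun p =>
  I p.2 /\ order_is J p.2 p.1.

Definition homog_set J (G : nat * R -> Prop) := forall p, G p -> ipow J p.1 p.2.

(* degree-n component of the ideal of gr_J(R) generated by G
   (as the set of representatives x in J^n of its classes) *)
Definition gen_comp J (G : nat * R -> Prop) (n : nat) : R -> Prop := fun x =>
  ipow J n x /\
  exists (k : nat) (a : nat -> R) (g : nat -> nat * R),
    (forall i, (i < k)%N ->
       [/\ G (g i), ((g i).1 <= n)%N & ipow J (n - (g i).1) (a i)]) /\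
    ipow J n.+1 (x - \sum_(i < k) a i * (g i).2).

Definition in_comp J I : nat -> R -> Prop := gen_comp J (init_forms J I).

Definition hom_gens J (Q : nat -> R -> Prop) (S : nat * R -> Prop) :=
  [/\ homog_set J S, (forall p, S p -> Q p.1 p.2) &
      (forall n x, Q n x <-> gen_comp J S n x)].

Definition min_hom_gens J Q (S : nat * R -> Prop) :=
  hom_gens J Q S /\
  forall S' : nat * R -> Prop, (forall p, S' p -> S p) ->
    (exists p, S p /\ ~ S' p) -> ~ hom_gens J Q S'.

(* d(Q) = d : the maximum degree of the elements of a minimal homogeneous
   generating set of Q (0 for the empty set) *)
Definition d_is J Q (d : nat) :=
  (exists S, min_hom_gens J Q S) /\
  forall S, min_hom_gens J Q S ->
    (forall p, S p -> (p.1 <= d)%N) /\ (d = 0%N \/ exists p, S p /\ p.1 = d).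

End Defs.

(* ar_J(I) is finite by the Artin-Rees lemma, proved from the Hilbert basis
   theorem applied to the Rees algebra R[Jt], an image of a polynomial ring over R.
   Let c = ar_J(I). As J^n ∩ I = J^(n-c) (J^c ∩ I) for n >= c, the initial forms of
   degree <= c generate in(I); hence a finite homogeneous generating set exists, one
   of minimal length is minimal, and in a minimal one an element of degree > c would
   be generated by the others, of degree <= c.
   Conversely, let c = d + 1 and suppose a minimal generating set has all its degrees
   <= d. Then J^m ∩ I ⊆ J^(m-d) (J^d ∩ I) + J^(m+1) ∩ I for m >= d; iterating and
   using the Artin-Rees property for c gives
   J^n ∩ I ⊆ J^(n-d) (J^d ∩ I) + J (J^n ∩ I), so Nakayama's lemma (J lies in the
   maximal ideal unless J = R, a trivial case) gives the Artin-Rees property for d,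
   contradicting the minimality of c. *)

From mathcomp Require Import all_boot all_order all_algebra.
From mathcomp Require Import zify ring.
From Stdlib Require Import Classical IndefiniteDescription.
Set Implicit Arguments. Unset Strict Implicit. Unset Printing Implicit Defensive.
Import GRing.Theory.
Local Open Scope ring_scope.

Lemma ex_min_nat (P : nat -> Prop) :
  (exists n, P n) -> exists n, P n /\ forall m, P m -> (n <= m)%N.
Proof.
move=> [n Pn]; apply: NNPP => nomin.
suff : forall k m, (m < k)%N -> ~ P m by move/(_ n.+1 n (ltnSn n)).
elim=> [|k IH] m // ltm Pm; apply: nomin; exists m; split => // m' Pm'.
by rewrite leqNgt; apply/negP => lt; apply: (IH m') => //; lia.
Qed.

Lemma sum_cat_family (T : Type) (V : nmodType) (P : T -> Prop) (F : T -> V)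
    k1 k2 (f1 f2 : nat -> T) :
  (forall i, (i < k1)%N -> P (f1 i)) -> (forall i, (i < k2)%N -> P (f2 i)) ->
  exists f : nat -> T, (forall i, (i < k1 + k2)%N -> P (f i)) /\
    \sum_(i < k1 + k2) F (f i) = \sum_(i < k1) F (f1 i) + \sum_(i < k2) F (f2 i).
Proof.
move=> P1 P2; exists (fun i => if (i < k1)%N then f1 i else f2 (i - k1)%N); split.
  by move=> i lti; case: ifPn => [/P1 //|]; rewrite -leqNgt => le; apply: P2; lia.
rewrite big_split_ord /=; congr (_ + _); apply: eq_bigr => i _ /=.
  by rewrite ltn_ord.
by rewrite ltnNge leq_addr /= addKn.
Qed.

Section Ideals.
Variable R : comNzRingType.
Implicit Types (A B C K M : R -> Prop) (s : seq R).

Definition add_id A B : R -> Prop := fun x => exists a b, [/\ A a, B b & x = a + b].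

Definition prod_gen_by A s : R -> Prop := fun x =>
  exists r : nat -> R, (forall i, A (r i)) /\ x = \sum_(i < size s) r i * nth 0 s i.

Lemma ideal0 A : ideal A -> A 0. Proof. by case. Qed.

Lemma idealD A x y : ideal A -> A x -> A y -> A (x + y).
Proof. by case=> _ AD _; apply: AD. Qed.

Lemma idealM A r x : ideal A -> A x -> A (r * x).
Proof. by case=> _ _ AM; apply: AM. Qed.

Lemma idealMr A r x : ideal A -> A x -> A (x * r).
Proof. by rewrite mulrC; apply: idealM. Qed.

Lemma idealB A x y : ideal A -> A x -> A y -> A (x - y).
Proof. by move=> iA Ax Ay; apply: idealD => //; rewrite -mulN1r; apply: idealM. Qed.

Lemma ideal_sum A k (f : nat -> R) :
  ideal A -> (forall i, (i < k)%N -> A (f i)) -> A (\sum_(i < k) f i).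
Proof.
move=> iA Af; apply: (big_ind A (ideal0 iA) (fun x y => idealD iA)) => i _.
exact: Af.
Qed.

Lemma ideal_seteq A B : seteq A B -> ideal A -> ideal B.
Proof.
move=> AB [A0 AD AM]; split; first exact/AB.
  by move=> x y /AB Ax /AB Ay; apply/AB/AD.
by move=> r x /AB Ax; apply/AB/AM.
Qed.

Lemma isect_ideal A B : ideal A -> ideal B -> ideal (isect A B).
Proof.
move=> iA iB; split; first by split; apply: ideal0.
  by move=> x y [? ?] [? ?]; split; apply: idealD.
by move=> r x [? ?]; split; apply: idealM.
Qed.

Lemma add_id_ideal A B : ideal A -> ideal B -> ideal (add_id A B).
Proof.
move=> iA iB; split.
- by exists 0, 0; rewrite addr0; split => //; apply: ideal0.
- move=> _ _ [a [b [Aa Bb ->]]] [a' [b' [Aa' Bb' ->]]].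
  by exists (a + a'), (b + b'); split; [apply: idealD..|rewrite addrACA].
- move=> r _ [a [b [Aa Bb ->]]]; exists (r * a), (r * b).
  by split; [apply: idealM..|rewrite mulrDr].
Qed.

Lemma add_id_mono A A' B B' : subid A A' -> subid B B' -> subid (add_id A B) (add_id A' B').
Proof. by move=> AA' BB' _ [a [b [Aa Bb ->]]]; exists a, b; split; [apply: AA' | apply: BB' |]. Qed.

Lemma prod_id_mul A B a b : A a -> B b -> prod_id A B (a * b).
Proof.
move=> Aa Bb; exists 1%N, (fun _ => a), (fun _ => b).
by split; [case | rewrite big_ord1].
Qed.

Lemma prod_id_ideal A B : ideal A -> ideal (prod_id A B).
Proof.
move=> iA; split.
- by exists 0%N, (fun _ => 0), (fun _ => 0); rewrite big_ord0.
- move=> _ _ [k1 [a1 [b1 [H1 ->]]]] [k2 [a2 [b2 [H2 ->]]]].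
  have [f [Hf <-]] := sum_cat_family (P := fun p => A p.1 /\ B p.2)
    (fun p => p.1 * p.2) (f1 := fun i => (a1 i, b1 i)) (f2 := fun i => (a2 i, b2 i)) H1 H2.
  by exists (k1 + k2)%N, (fun i => (f i).1), (fun i => (f i).2).
- move=> r _ [k [a [b [H ->]]]]; exists k, (fun i => r * a i), b; split.
    by move=> i /H [Aa Bb]; split => //; apply: idealM.
  by rewrite mulr_sumr; apply: eq_bigr => i _; rewrite mulrA.
Qed.

Lemma prod_id_min A B C : ideal C -> (forall a b, A a -> B b -> C (a * b)) ->
  subid (prod_id A B) C.
Proof.
move=> iC ABC _ [k [a [b [H ->]]]].
by apply: (ideal_sum (f := fun i => a i * b i)) => // i /H [Aa Bb]; apply: ABC.
Qed.

Lemma prod_id_mono A A' B B' : subid A A' -> subid B B' ->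
  subid (prod_id A B) (prod_id A' B').
Proof.
move=> AA' BB' x [k [a [b [H ->]]]]; exists k, a, b; split => //.
by move=> i /H [Aa Bb]; split; [apply: AA' | apply: BB'].
Qed.

Lemma prod_id_lmul A A' B r x : (forall a, A a -> A' (r * a)) ->
  prod_id A B x -> prod_id A' B (r * x).
Proof.
move=> AA' [k [a [b [H ->]]]]; exists k, (fun i => r * a i), b; split.
  by move=> i /H [Aa Bb]; split => //; apply: AA'.
by rewrite mulr_sumr; apply: eq_bigr => i _; rewrite mulrA.
Qed.

Lemma prod_id_rmul A B B' r x : (forall b, B b -> B' (b * r)) ->
  prod_id A B x -> prod_id A B' (x * r).
Proof.
move=> BB' [k [a [b [H ->]]]]; exists k, a, (fun i => b i * r); split.
  by move=> i /H [Aa Bb]; split => //; apply: BB'.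
by rewrite mulr_suml; apply: eq_bigr => i _; rewrite mulrA.
Qed.

Lemma gen_by_ideal s : ideal (gen_by s).
Proof.
split.
- by exists (fun _ => 0); rewrite big1 // => i _; rewrite mul0r.
- move=> _ _ [r1 ->] [r2 ->]; exists (fun i => r1 i + r2 i).
  by rewrite -big_split; apply: eq_bigr => i _; rewrite mulrDl.
- move=> r _ [r1 ->]; exists (fun i => r * r1 i).
  by rewrite mulr_sumr; apply: eq_bigr => i _; rewrite mulrA.
Qed.

Lemma gen_by_nth s i : (i < size s)%N -> gen_by s (nth 0 s i).
Proof.
move=> lti; exists (fun j => (j == i)%:R).
rewrite (bigD1 (Ordinal lti)) //= eqxx mul1r big1 ?addr0 // => j.
by rewrite -val_eqE /= => /negbTE ->; rewrite mul0r.
Qed.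

Lemma gen_by_mem s x : x \in s -> gen_by s x.
Proof. by move=> xs; rewrite -(nth_index 0 xs); apply/gen_by_nth; rewrite index_mem. Qed.

Lemma gen_by_min s A : ideal A -> (forall x, x \in s -> A x) -> subid (gen_by s) A.
Proof.
move=> iA sA _ [r ->]; apply: (ideal_sum (f := fun i => r i * nth 0 s i)) => // i lti.
by apply: idealM => //; apply/sA/mem_nth.
Qed.

Lemma prod_gen_by_ideal A s : ideal A -> ideal (prod_gen_by A s).
Proof.
move=> iA; split.
- by exists (fun _ => 0); split => [_|]; [apply: ideal0 | rewrite big1 // => i; rewrite mul0r].
- move=> _ _ [r1 [A1 ->]] [r2 [A2 ->]]; exists (fun i => r1 i + r2 i); split.
    by move=> i; apply: idealD.
  by rewrite -big_split; apply: eq_bigr => i _; rewrite mulrDl.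
- move=> r _ [r1 [A1 ->]]; exists (fun i => r * r1 i); split; first by move=> i; apply: idealM.
  by rewrite mulr_sumr; apply: eq_bigr => i _; rewrite mulrA.
Qed.

Lemma prod_id_gen_by A s : ideal A -> subid (prod_id A (gen_by s)) (prod_gen_by A s).
Proof.
move=> iA; apply: prod_id_min; first exact: prod_gen_by_ideal.
move=> a _ Aa [r ->]; exists (fun i => a * r i); split; first by move=> i; apply: idealMr.
by rewrite mulr_sumr; apply: eq_bigr => i _; rewrite mulrA.
Qed.

End Ideals.

Section Powers.
Variables (R : comNzRingType) (J : R -> Prop).
Hypothesis iJ : ideal J.

Lemma ipow_ideal n : ideal (ipow J n).
Proof. by case: n => [|n] //=; apply: prod_id_ideal. Qed.

Lemma ipowD m n x y : ipow J m x -> ipow J n y -> ipow J (m + n) (x * y).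
Proof.
elim: m x => [|m IH] x /=; first by move=> _ Jy; apply: idealM => //; apply: ipow_ideal.
by move=> Jx Jy; apply: prod_id_rmul Jx => b Jb; apply: IH.
Qed.

Lemma ipow_split m n : subid (ipow J (m + n)) (prod_id (ipow J m) (ipow J n)).
Proof.
elim: m => [|m IH] x /=; first by move=> Jx; rewrite -[x]mul1r; apply: prod_id_mul.
apply: prod_id_min; first exact/prod_id_ideal/prod_id_ideal.
by move=> a b Ja /IH; apply: prod_id_lmul => u; apply: prod_id_mul.
Qed.

Lemma ipow_le m n x : (n <= m)%N -> ipow J m x -> ipow J n x.
Proof.
move=> le; rewrite -(subnKC le) => /ipow_split.
apply: prod_id_min; first exact: ipow_ideal.
by move=> a b Ja _; apply: idealMr => //; apply: ipow_ideal.
Qed.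

Lemma ipow_full n x : J 1 -> ipow J n x.
Proof.
move=> J1; rewrite -[x]mulr1 -[n]add0n; apply: ipowD => //.
by elim: n => [|n IH] //=; rewrite -[1]mulr1; apply: prod_id_mul.
Qed.

End Powers.

Section Noetherian.
Variable R : comNzRingType.
Hypothesis noeR : noetherian R.
Implicit Types (A J K M : R -> Prop).

Lemma noetherian_chain_stable (B : nat -> R -> Prop) :
  (forall k, ideal (B k)) -> (forall k, subid (B k) (B k.+1)) ->
  exists N, forall k, subid (B k) (B N).
Proof.
move=> iB BS; have Bmono k l : (k <= l)%N -> subid (B k) (B l).
  by move=> /subnK <-; elim: (l - k)%N => [|j IH] // x /IH /BS.
pose U x := exists k, B k x.
have iU : ideal U.
  split; first by exists 0%N; apply: ideal0.
    move=> x y [k Bx] [l By]; exists (maxn k l); apply: idealD => //.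
      exact: Bmono (leq_maxl k l) _ Bx.
    exact: Bmono (leq_maxr k l) _ By.
  by move=> r x [k Bx]; exists k; apply: idealM.
have [s Us] := noeR iU.
have [N sB] : exists N, forall x, x \in s -> B N x.
  have : forall x, x \in s -> U x by move=> x /gen_by_mem /Us.
  elim: s {Us} => [|a t IH] sU; first by exists 0%N.
  have [N tB] := IH (fun x xt => sU x (mem_behead (s := a :: t) xt)).
  have [k Ba] := sU a (mem_head a t).
  exists (maxn k N) => x; rewrite inE => /predU1P [->|/tB].
    exact: Bmono (leq_maxl k N) _ Ba.
  exact: Bmono (leq_maxr k N) x.
by exists N => k x Bx; apply: (gen_by_min (iB N) sB); apply/Us; exists k.
Qed.

Lemma proper_ideal_sub_maximal A : ideal A -> ~ A 1 ->
  exists M, maximal_ideal M /\ subid A M.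
Proof.
move=> iA nA1; apply: NNPP => nomax.
pose above B := [/\ ideal B, ~ B 1 & subid A B].
have grow B : exists C, above B -> above C /\ subid B C /\ exists x, C x /\ ~ B x.
  case: (classic (above B)) => [[iB nB1 AB]|]; last by exists B.
  apply: NNPP => nogrow; apply: nomax; exists B; split => //; split => // C iC BC nC1 x.
  split; last exact: BC.
  move=> Cx; apply: NNPP => nBx; apply: nogrow; exists C => _.
  by split; [split => // y /AB /BC | split => //; exists x].
have [f Hf] := functional_choice _ grow.
pose B k := iter k f A.
have aboveB k : above (B k).
  by elim: k => [|k IH]; [split => // x | have [] := Hf _ IH].
have [N BN] : exists N, forall k, subid (B k) (B N).
  apply: noetherian_chain_stable => k; first by case: (aboveB k).
  by have [_ []] := Hf _ (aboveB k).
by have [_ [_ [x [Bx /(_ (BN N.+1 x Bx))]]]] := Hf _ (aboveB N).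
Qed.

Lemma local_unit_1B J j : local_ring R -> ideal J -> ~ J 1 -> J j ->
  exists v, v * (1 - j) = 1.
Proof.
move=> [M [maxM uniqM]] iJ nJ1 Jj.
pose A x := exists r, x = r * (1 - j).
have iA : ideal A.
  split; first by exists 0; rewrite mul0r.
    by move=> _ _ [r1 ->] [r2 ->]; exists (r1 + r2); rewrite mulrDl.
  by move=> r _ [r1 ->]; exists (r * r1); rewrite mulrA.
case: (classic (A 1)) => [[v v1B]|nA1]; first by exists v.
have [M1 [maxM1 AM1]] := proper_ideal_sub_maximal iA nA1.
have [M2 [maxM2 JM2]] := proper_ideal_sub_maximal iJ nJ1.
case: maxM => iM nM1 _; case: nM1; rewrite -(subrK j 1).
apply: idealD => //; first by apply/(uniqM _ maxM1)/AM1; exists 1; rewrite mul1r.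
exact/(uniqM _ maxM2)/JM2.
Qed.

Section Nakayama.
Variables J K M : R -> Prop.
Hypotheses (locR : local_ring R) (iJ : ideal J) (nJ1 : ~ J 1).
Hypotheses (iK : ideal K) (iM : ideal M).
Hypothesis M_JM : subid M (add_id K (prod_id J M)).

Lemma nakayama_gens t : (forall x, x \in t -> M x) ->
  subid M (add_id K (gen_by t)) -> subid M K.
Proof.
elim: t => [|a t IH] tM M_Kt x Mx.
  by have [k [_ [Kk [r ->] ->]]] := M_Kt x Mx; rewrite big_ord0 addr0.
have JM_Kat : subid (prod_id J M) (add_id K (prod_gen_by J (a :: t))).
  apply: prod_id_min; first exact/add_id_ideal/prod_gen_by_ideal.
  move=> u m Ju /M_Kt [k [g [Kk Gg ->]]]; exists (u * k), (u * g).
  by split; [apply: idealM | apply/prod_id_gen_by/prod_id_mul | rewrite mulrDr].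
have Kta : add_id K (gen_by t) a.
  have [k [z [Kk /JM_Kat [k' [_ [Kk' [r [Jr ->]]] ->]] ea]]] := M_JM (tM a (mem_head a t)).
  move: ea; rewrite big_ord_recl /=.
  set S := \sum_(i < size t) _ => ea.
  have [v v1B] := local_unit_1B locR iJ nJ1 (Jr 0%N).
  have -> : a = v * (k + k') + v * S.
    rewrite -mulrDr -[a]mul1r -v1B -mulrA; congr (_ * _).
    by rewrite mulrBl mul1r {1}ea; ring.
  exists (v * (k + k')), (v * S); split => //; first by apply: idealM => //; apply: idealD.
  exists (fun i => v * r (bump 0 i)).
  by rewrite mulr_sumr; apply: eq_bigr => i _; rewrite mulrA.
apply: IH Mx => [y yt|y /M_Kt [k [_ [Kk [r ->] ->]]]].
  exact: (tM y (mem_behead (s := a :: t) yt)).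
rewrite big_ord_recl /=; have [ka [ya [Kka Gya ->]]] := Kta.
exists (k + r 0%N * ka), (r 0%N * ya + \sum_(i < size t) r (bump 0 i) * nth 0 t i).
split; [by apply: idealD => //; apply: idealM | | ring].
apply: idealD; [exact: gen_by_ideal | apply: idealM => //; exact: gen_by_ideal |].
by exists (fun i => r (bump 0 i)).
Qed.

Lemma nakayama : subid M K.
Proof.
have [s Ms] := noeR iM.
apply: (nakayama_gens (t := s)) => [x /gen_by_mem /Ms //|x /Ms Gx].
by exists 0, x; split => //; [apply: ideal0 | rewrite add0r].
Qed.

End Nakayama.

End Noetherian.

Lemma poly_reduce_top (A : comNzRingType) (p : {poly A}) (qs : seq {poly A}) n e :
  (e <= n)%N -> (size p <= n.+1)%N -> (forall q, q \in qs -> (size q <= e.+1)%N) ->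
  gen_by [seq q`_e | q : {poly A} <- qs] p`_n ->
  exists g, gen_by qs g /\ (size (p - g * 'X^(n - e))%R <= n)%N.
Proof.
move=> le_en szp szqs [r]; rewrite size_map => er.
pose g := \sum_(i < size qs) (r i)%:P * nth 0 qs i.
have coef_g m : g`_m = \sum_(i < size qs) r i * (nth 0 qs i)`_m.
  by rewrite coef_sum; apply: eq_bigr => i _; rewrite coefCM.
exists g; split; first by exists (fun i => (r i)%:P).
apply/leq_sizeP => j; rewrite leq_eqVlt => /predU1P [<-|lt_nj].
  rewrite coefB coefMXn ltnNge leq_subr subKn // coef_g er.
  by apply/eqP; rewrite subr_eq0; apply/eqP/eq_bigr => i _; rewrite (nth_map 0).
rewrite coefB coefMXn ltnNge (leq_trans (leq_subr _ _) (ltnW lt_nj)) /=.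
rewrite (leq_sizeP _ _ szp) // coef_g big1 ?subr0 // => i _.
rewrite (leq_sizeP _ _ (szqs _ (mem_nth 0 (ltn_ord i)))) ?mulr0 //; lia.
Qed.

Section HilbertBasis.
Variable A : comNzRingType.
Hypothesis noeA : noetherian A.
Variable N : {poly A} -> Prop.
Hypothesis iN : ideal N.

Definition lead_ideal d (c : A) := exists p, [/\ N p, (size p <= d.+1)%N & p`_d = c].

Lemma lead_ideal_ideal d : ideal (lead_ideal d).
Proof.
split.
- by exists 0; rewrite size_poly0 coef0; split => //; apply: ideal0.
- move=> _ _ [p [Np szp <-]] [q [Nq szq <-]]; exists (p + q); rewrite coefD.
  split => //; first exact: idealD.
  by apply: leq_trans (size_polyD _ _) _; rewrite geq_max szp.
- move=> r _ [p [Np szp <-]]; exists (r%:P * p); rewrite coefCM; split => //.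
    exact: idealM.
  by rewrite mul_polyC; apply: leq_trans (size_scale_leq _ _) szp.
Qed.

Lemma lead_idealS d : subid (lead_ideal d) (lead_ideal d.+1).
Proof.
move=> _ [p [Np szp <-]]; exists (p * 'X); rewrite coefMX /=; split => //.
  exact: idealMr.
by apply: leq_trans (size_polyMleq _ _) _; rewrite size_polyX; lia.
Qed.

Lemma lead_ideal_gens d : exists ps : seq {poly A},
  (forall p, p \in ps -> N p /\ (size p <= d.+1)%N) /\
  subid (lead_ideal d) (gen_by [seq p`_d | p : {poly A} <- ps]).
Proof.
have [t Lt] := noeA (lead_ideal_ideal d).
suff [ps [Hps psE]] : exists ps : seq {poly A},
    (forall p, p \in ps -> N p /\ (size p <= d.+1)%N) /\ [seq p`_d | p : {poly A} <- ps] = t.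
  by exists ps; split => // c /Lt; rewrite psE.
have : forall c, c \in t -> lead_ideal d c by move=> c /gen_by_mem /Lt.
elim: t {Lt} => [|c t IH] tL; first by exists [::].
have [ps [Hps <-]] := IH (fun x xt => tL x (mem_behead (s := c :: t) xt)).
have [p [Np szp pc]] := tL c (mem_head c t).
exists (p :: ps); split => [q|]; last by rewrite /= pc.
by rewrite inE => /predU1P [->|/Hps].
Qed.

Lemma poly_ideal_fg : exists gs, seteq N (gen_by gs).
Proof.
have [D LD] : exists D, forall d, subid (lead_ideal d) (lead_ideal D).
  exact/noetherian_chain_stable/lead_idealS/lead_ideal_ideal.
have [ps Hps] := functional_choice _ lead_ideal_gens.
pose gs := flatten [seq ps d | d <- iota 0 D.+1].
have gs_ps d : (d <= D)%N -> subid (gen_by (ps d)) (gen_by gs).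
  move=> le_dD; apply: gen_by_min => [|q qps]; first exact: gen_by_ideal.
  apply/gen_by_mem/flattenP; exists (ps d) => //.
  by apply: (map_f ps); rewrite mem_iota.
have gsN : subid (gen_by gs) N.
  apply: gen_by_min => // q /flattenP [_ /mapP [d _ ->]].
  by have [+ _] := Hps d => /[apply] -[].
suff sized n (p : {poly A}) : (size p <= n)%N -> N p -> gen_by gs p.
  by exists gs => p; split; [apply: sized (leqnn _) | apply: gsN].
elim: n p => [|n IH] p szp Np.
  by move: szp; rewrite leqn0 size_poly_eq0 => /eqP ->; exact: ideal0 (gen_by_ideal _).
have [e [le_eD le_en Le]] : exists e, [/\ e <= D, e <= n & lead_ideal e p`_n]%N.
  have Ln : lead_ideal n p`_n by exists p.
  case: (leqP n D) => [le_nD|lt_Dn]; first by exists n.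
  by exists D; split => //; [apply: ltnW | apply: LD Ln].
have [psN /(_ _ Le) psG] := Hps e.
have [g [Gg szpg]] := poly_reduce_top le_en szp (fun q qps => (psN q qps).2) psG.
have Ng : N g by apply: gen_by_min Gg => // q /psN [].
rewrite -(subrK (g * 'X^(n - e)) p); apply: idealD; first exact: gen_by_ideal.
  by apply: IH szpg _; apply: idealB => //; apply: idealMr.
by apply: idealMr; [exact: gen_by_ideal | exact: gs_ps Gg].
Qed.

End HilbertBasis.

Lemma noetherian_poly (A : comNzRingType) : noetherian A -> noetherian {poly A}.
Proof. by move=> noeA N iN; apply: poly_ideal_fg. Qed.

Section ArtinReesCondition.
Variables (R : comNzRingType) (J I : R -> Prop).
Hypotheses (iJ : ideal J) (iI : ideal I).

Definition ar_rhs n d := prod_id (ipow J (n - d)) (isect (ipow J d) I).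

Lemma ar_rhs_ideal n d : ideal (ar_rhs n d).
Proof. exact/prod_id_ideal/ipow_ideal. Qed.

Lemma ar_rhs_sub n d : (d <= n)%N -> subid (ar_rhs n d) (isect (ipow J n) I).
Proof.
move=> le_dn; apply: prod_id_min; first exact/isect_ideal/iI/ipow_ideal.
move=> a b Ja [Jb Ib]; split; last exact: idealM.
by rewrite -(subnK le_dn); apply: ipowD.
Qed.

Lemma ar_rhs_mul n d e a g : (e <= d)%N -> (d <= n)%N ->
  ipow J (n - e) a -> ipow J e g -> I g -> ar_rhs n d (a * g).
Proof.
move=> le_ed le_dn Ja Jg Ig.
rewrite /ar_rhs; have /(ipow_split iJ) : ipow J ((n - d) + (d - e)) a by rewrite addnBA // subnK.
apply: prod_id_rmul => b Jb; split; last exact: idealM.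
by rewrite -(subnK le_ed); apply: ipowD.
Qed.

Lemma ar_condP c : (forall n, (c <= n)%N -> subid (isect (ipow J n) I) (ar_rhs n c)) ->
  ar_cond J I c.
Proof. by move=> sub n le_cn x; split; [apply: sub | apply: ar_rhs_sub]. Qed.

Lemma ar_cond_full c : J 1 -> ar_cond J I c.
Proof.
move=> J1; apply: ar_condP => n _ x [_ Ix]; rewrite -[x]mul1r.
by apply: prod_id_mul; [apply: ipow_full | split; [apply: ipow_full|]].
Qed.

End ArtinReesCondition.

Lemma ideal_preimage (A B : comNzRingType) (f : {rmorphism A -> B}) (M : B -> Prop) :
  ideal M -> ideal (fun x => M (f x)).
Proof.
move=> iM; split; first by rewrite rmorph0; apply: ideal0.
  by move=> x y Mx My; rewrite rmorphD; apply: idealD.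
by move=> r x Mx; rewrite rmorphM; apply: idealM.
Qed.

Lemma coef_ideal (R : comNzRingType) (I : R -> Prop) :
  ideal I -> ideal (fun p : {poly R} => forall k, I p`_k).
Proof.
move=> iI; split; first by move=> k; rewrite coef0; apply: ideal0.
  by move=> p q Ip Iq k; rewrite coefD; apply: idealD.
move=> r p Ip k; rewrite coefM.
by apply: (ideal_sum (f := fun j : nat => r`_j * p`_(k - j))) => // j _; apply: idealM.
Qed.

Section ReesAlgebra.
Variable R : comNzRingType.

Fixpoint poly_iter (r : nat) : comNzRingType :=
  if r is r'.+1 then {poly poly_iter r'} else R.

Lemma noetherian_poly_iter r : noetherian R -> noetherian (poly_iter r).
Proof. by move=> noeR; elim: r => [|r IH] //=; apply: noetherian_poly. Qed.

(* [rees_map s] maps the variables of R[x_1, ..., x_r], r = size s, to the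
   monomials s_i t of R[t]; its image is the Rees algebra R[Jt] when s generates J. *)
Fixpoint rees_map (s : seq R) : {rmorphism poly_iter (size s) -> {poly R}} :=
  match s return {rmorphism poly_iter (size s) -> {poly R}} with
  | [::] => GRing.RMorphism.clone _ _ (@polyC R) _
  | a :: s' =>
    GRing.RMorphism.clone _ _ (horner_eval (a *: 'X) \o map_poly (rees_map s'))%FUN _
  end.

Lemma rees_map_cons a s (F : poly_iter (size (a :: s))) :
  rees_map (a :: s) F = (map_poly (rees_map s) F).[a *: 'X].
Proof. by []. Qed.

Lemma rees_mapC s c : exists F, rees_map s F = c%:P.
Proof.
elim: s => [|a s [F eF]]; first by exists c.
by exists (F%:P : poly_iter (size (a :: s))); rewrite rees_map_cons map_polyC hornerC.
Qed.

Lemma rees_mapX s j : (j < size s)%N -> exists F, rees_map s F = (nth 0 s j) *: 'X.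
Proof.
elim: s j => [|a s IH] [|j] // lt_js.
  by exists ('X : poly_iter (size (a :: s))); rewrite rees_map_cons map_polyX hornerX.
have [F eF] := IH j lt_js.
by exists (F%:P : poly_iter (size (a :: s))); rewrite rees_map_cons map_polyC hornerC.
Qed.

Variable J : R -> Prop.
Hypothesis iJ : ideal J.

Definition in_rees (q : {poly R}) := forall k, ipow J k q`_k.

Lemma in_reesC c : in_rees c%:P.
Proof. by case=> [|k]; rewrite coefC //; exact: ideal0 (ipow_ideal iJ _). Qed.

Lemma in_reesD p q : in_rees p -> in_rees q -> in_rees (p + q).
Proof. by move=> Rp Rq k; rewrite coefD; apply: idealD (ipow_ideal iJ k) _ _. Qed.

Lemma in_reesM p q : in_rees p -> in_rees q -> in_rees (p * q).
Proof.
move=> Rp Rq k; rewrite coefM.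
apply: (ideal_sum (f := fun j : nat => p`_j * q`_(k - j))) (ipow_ideal iJ k) _ => j lt_jk.
by rewrite -(subnKC (ltnSE lt_jk)); apply: ipowD; rewrite ?addKn.
Qed.

Lemma in_reesX a : J a -> in_rees (a *: 'X).
Proof.
move=> Ja [|[|k]]; rewrite coefZ coefX /= ?mulr0 //; first exact: prod_id_mul.
exact: ideal0 (ipow_ideal iJ k.+2).
Qed.

Lemma in_rees_map s : (forall x, x \in s -> J x) -> forall F, in_rees (rees_map s F).
Proof.
elim: s => [|a s IH] sJ F; first exact: in_reesC.
rewrite rees_map_cons horner_coef; apply: (big_ind in_rees (in_reesC 0) in_reesD) => i _.
apply: in_reesM; first by rewrite coef_map; apply: IH => x xs; apply/sJ/mem_behead.
elim: (nat_of_ord i) => [|m IHm]; first by rewrite expr0; apply: in_reesC.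
by rewrite exprS; apply: in_reesM IHm; apply/in_reesX/sJ/mem_head.
Qed.

Lemma rees_map_surj s : seteq J (gen_by s) -> forall n x, ipow J n x ->
  exists F, rees_map s F = x *: 'X^n.
Proof.
move=> Js; pose T n x := exists F, rees_map s F = x *: 'X^n.
have iT n : ideal (T n).
  split; first by exists 0; rewrite rmorph0 scale0r.
    by move=> x y [F1 e1] [F2 e2]; exists (F1 + F2); rewrite rmorphD e1 e2 scalerDl.
  move=> r x [F eF]; have [C eC] := rees_mapC s r.
  by exists (C * F); rewrite rmorphM eC eF mul_polyC scalerA.
have T1 : subid J (T 1%N).
  move=> u /Js; apply: gen_by_min => // _ /(nthP 0) [j lt_js <-].
  by have [F eF] := rees_mapX lt_js; exists F; rewrite eF expr1.
elim=> [|n IH] x /=.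
  by move=> _; have [F eF] := rees_mapC s x; exists F; rewrite eF expr0 alg_polyC.
apply: (prod_id_min (iT n.+1)) => u v /T1 [F1 e1] /IH [F2 e2].
by exists (F1 * F2); rewrite rmorphM e1 e2 -!mul_polyC polyCM expr1 exprS; ring.
Qed.

Variable I : R -> Prop.
Hypothesis iI : ideal I.

Lemma in_rees_coefM_ar u v n D : in_rees u -> in_rees v -> (forall k, I v`_k) ->
  (size v <= D.+1)%N -> (D <= n)%N -> ar_rhs J I n D (u * v)`_n.
Proof.
move=> Ru Rv Iv szv le_Dn; rewrite coefM.
apply: (ideal_sum (f := fun j : nat => u`_j * v`_(n - j))) (ar_rhs_ideal I iJ n D) _.
move=> j lt_jn; case: (leqP (n - j) D) => [le|lt].
  by apply: (ar_rhs_mul iJ iI le le_Dn); rewrite // subKn.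
by rewrite (leq_sizeP _ _ szv) // mulr0; apply: ideal0 (ar_rhs_ideal I iJ n D).
Qed.

Lemma artin_rees : noetherian R -> exists c, ar_cond J I c.
Proof.
move=> noeR; have [s Js] := noeR J iJ.
have sJ x : x \in s -> J x by move/gen_by_mem/Js.
pose N F := forall k, I (rees_map s F)`_k.
have [gs Ngs] := noetherian_poly_iter noeR (ideal_preimage (rees_map s) (coef_ideal iI)).
pose D := \max_(g <- gs) size (rees_map s g).
exists D; apply: (ar_condP iJ iI) => n le_Dn x [Jx Ix].
have [F eF] := rees_map_surj Js Jx.
have NF : N F.
  by move=> k; rewrite eF coefZ coefXn; case: eqP => _; rewrite ?mulr1 ?mulr0 //; exact: ideal0.
have -> : x = (rees_map s F)`_n by rewrite eF coefZ coefXn eqxx mulr1.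
have [h ->] := (Ngs F).1 NF; rewrite rmorph_sum coef_sum.
apply: (ideal_sum (f := fun i => (rees_map s (h i * nth 0 gs i))`_n)).
  exact: ar_rhs_ideal.
move=> i lti; rewrite rmorphM.
apply: in_rees_coefM_ar => //; try exact: in_rees_map.
  by move=> k; apply/(Ngs _).2/gen_by_nth.
apply/leqW/(@leq_bigmax_seq _ gs xpredT (fun g => size (rees_map s g))) => //.
exact: mem_nth.
Qed.

End ReesAlgebra.

Section GradedIdeals.
Variables (R : comNzRingType) (J : R -> Prop).
Hypothesis iJ : ideal J.
Implicit Types (G S : nat * R -> Prop).

Definition hom_comb G n : R -> Prop := fun y =>
  exists k (a : nat -> R) (g : nat -> nat * R),
    (forall i, (i < k)%N -> [/\ G (g i), ((g i).1 <= n)%N & ipow J (n - (g i).1) (a i)]) /\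
    y = \sum_(i < k) a i * (g i).2.

Lemma hom_comb_ideal G n : ideal (hom_comb G n).
Proof.
split.
- by exists 0%N, (fun _ => 0), (fun _ => (0%N, 0)); rewrite big_ord0.
- move=> _ _ [k1 [a1 [g1 [H1 ->]]]] [k2 [a2 [g2 [H2 ->]]]].
  have [f [Hf <-]] := sum_cat_family
    (P := fun p => [/\ G p.2, (p.2.1 <= n)%N & ipow J (n - p.2.1) p.1])
    (fun p => p.1 * p.2.2) (f1 := fun i => (a1 i, g1 i)) (f2 := fun i => (a2 i, g2 i)) H1 H2.
  by exists (k1 + k2)%N, (fun i => (f i).1), (fun i => (f i).2).
- move=> r _ [k [a [g [H ->]]]]; exists k, (fun i => r * a i), g; split.
    by move=> i /H [Gg le Ja]; split => //; apply: idealM (ipow_ideal iJ _) _.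
  by rewrite mulr_sumr; apply: eq_bigr => i _; rewrite mulrA.
Qed.

Lemma hom_comb_min G n (C : R -> Prop) : ideal C ->
  (forall p a, G p -> (p.1 <= n)%N -> ipow J (n - p.1) a -> C (a * p.2)) ->
  subid (hom_comb G n) C.
Proof.
move=> iC GC _ [k [a [g [H ->]]]].
by apply: (ideal_sum (f := fun i => a i * (g i).2)) => // i /H [Gg le Ja]; apply: GC.
Qed.

Lemma hom_combM G m n b y : ipow J m b -> hom_comb G n y -> hom_comb G (m + n) (b * y).
Proof.
move=> Jb [k [a [g [H ->]]]]; exists k, (fun i => b * a i), g; split.
  move=> i /H [Gg le Ja]; split => //; first exact: leq_trans le (leq_addl _ _).
  by rewrite -addnBA //; apply: ipowD.
by rewrite mulr_sumr; apply: eq_bigr => i _; rewrite mulrA.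
Qed.

Lemma gen_compE G n x :
  gen_comp J G n x <-> isect (ipow J n) (add_id (hom_comb G n) (ipow J n.+1)) x.
Proof.
split=> [[Jx [k [a [g [H Jd]]]]] | [Jx [y [c [[k [a [g [H ey]]]] Jc ex]]]]].
  split => //; exists (\sum_(i < k) a i * (g i).2), (x - \sum_(i < k) a i * (g i).2).
  by split; [exists k, a, g | | rewrite addrC subrK].
by split => //; exists k, a, g; split => //; rewrite -ey ex addrC addKr.
Qed.

Lemma gen_comp_ideal G n : ideal (gen_comp J G n).
Proof.
apply: (ideal_seteq (A := isect (ipow J n) (add_id (hom_comb G n) (ipow J n.+1)))).
  by move=> x; rewrite gen_compE.
apply: isect_ideal (ipow_ideal iJ n) _.
exact: add_id_ideal (hom_comb_ideal G n) (ipow_ideal iJ _).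
Qed.

Lemma gen_compM G m n b x : ipow J m b -> gen_comp J G n x -> gen_comp J G (m + n) (b * x).
Proof.
move=> Jb /gen_compE [Jx [y [c [Gy Jc ex]]]]; apply/gen_compE.
split; first exact: ipowD.
exists (b * y), (b * c); split; [exact: hom_combM | | by rewrite ex mulrDr].
by rewrite -addnS; apply: ipowD.
Qed.

Lemma gen_comp_congr G n x y : gen_comp J G n y -> ipow J n x -> ipow J n.+1 (x - y) ->
  gen_comp J G n x.
Proof.
move=> /gen_compE [Jy [z [c [Gz Jc ey]]]] Jx Jxy; apply/gen_compE; split => //.
exists z, ((x - y) + c); split => //; first exact: idealD (ipow_ideal iJ _) _ _.
by rewrite ey; ring.
Qed.

Lemma gen_comp_subset G G' n : (forall p, G p -> (p.1 <= n)%N -> G' p) ->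
  subid (gen_comp J G n) (gen_comp J G' n).
Proof.
move=> GG' x [Jx [k [a [g [H Jd]]]]]; split => //; exists k, a, g; split => //.
by move=> i /H [Gg le Ja]; split => //; apply: GG'.
Qed.

Lemma gen_comp_gen G p : G p -> ipow J p.1 p.2 -> gen_comp J G p.1 p.2.
Proof.
move=> Gp Jp; split => //; exists 1%N, (fun _ => 1), (fun _ => p); split.
  by move=> i _; split => //; rewrite subnn.
by rewrite big_ord1 mul1r subrr; apply: ideal0 (ipow_ideal iJ _).
Qed.

Lemma gen_comp_trans G G' n : (forall p, G p -> gen_comp J G' p.1 p.2) ->
  subid (gen_comp J G n) (gen_comp J G' n).
Proof.
move=> GG' x /gen_compE [Jx [y [c [Gy Jc exy]]]].
apply: (gen_comp_congr (y := y)) Jx _; last by rewrite exy addrC addKr.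
apply: (hom_comb_min (gen_comp_ideal G' n)) Gy => p a Gp le Ja.
by rewrite -(subnK le); apply: gen_compM (GG' p Gp).
Qed.

End GradedIdeals.

Section ArtinReesDescent.
Variables (R : comNzRingType) (J I : R -> Prop).
Hypotheses (iJ : ideal J) (iI : ideal I).

Definition graded_ar_cond d := forall m, (d <= m)%N ->
  subid (isect (ipow J m) I) (add_id (ar_rhs J I m d) (isect (ipow J m.+1) I)).

Lemma ar_rhs_le m n d : (d <= n <= m)%N -> subid (ar_rhs J I m d) (ar_rhs J I n d).
Proof.
move=> /andP [le_dn le_nm]; apply: prod_id_mono => // x.
by apply: ipow_le => //; apply: leq_sub2r.
Qed.

Lemma graded_ar_cond_approx d n j : graded_ar_cond d -> (d <= n)%N ->
  subid (isect (ipow J n) I) (add_id (ar_rhs J I n d) (isect (ipow J (n + j)) I)).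
Proof.
move=> step le_dn x Mx; elim: j => [|j [k [z [Kk Mz ->]]]].
  by exists 0, x; rewrite addn0 add0r; split => //; apply: ideal0 (ar_rhs_ideal I iJ n d).
have [k' [z' [Kk' Mz' ->]]] := step _ (leq_trans le_dn (leq_addr j n)) z Mz.
exists (k + k'), z'; rewrite addnS addrA; split => //.
apply: idealD (ar_rhs_ideal I iJ n d) Kk _.
by apply: ar_rhs_le Kk'; rewrite le_dn leq_addr.
Qed.

(* Approximating to order n + d + 2 leaves a remainder in
   J^(n+1) (J^(d+1) ∩ I) ⊆ J (J^n ∩ I), to which Nakayama's lemma applies. *)
Lemma ar_cond_of_graded d : noetherian R -> local_ring R -> ~ J 1 ->
  ar_cond J I d.+1 -> graded_ar_cond d -> ar_cond J I d.
Proof.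
move=> noeR locR nJ1 ARd1 step; apply: (ar_condP iJ iI) => n le_dn.
have iM := isect_ideal (ipow_ideal iJ n) iI.
apply: (nakayama noeR locR iJ nJ1 (ar_rhs_ideal I iJ n d) iM) => x Mx.
have [k [z [Kk Mz ->]]] := graded_ar_cond_approx d.+2 step le_dn Mx.
exists k, z; split => //.
have /(ARd1 _ (leq_addl _ _)) : isect (ipow J (n.+1 + d.+1)) I z by rewrite addSnnS.
rewrite /ar_rhs addnK /=; apply: prod_id_min; first exact: prod_id_ideal.
move=> u v Ju [Jv Iv]; apply: prod_id_rmul Ju => w Jw; split; last exact: idealM.
exact: idealMr (ipow_ideal iJ n) Jw.
Qed.

End ArtinReesDescent.

Section InitialIdeal.
Variables (R : comNzRingType) (J I : R -> Prop).
Hypotheses (iJ : ideal J) (iI : ideal I).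
Implicit Types (S : nat * R -> Prop).
Notation Q := (in_comp J I).

Lemma in_comp_isect n : subid (isect (ipow J n) I) (Q n).
Proof.
move=> y [Jy Iy]; case: (classic (ipow J n.+1 y)) => [Jy1|nJy1].
  by apply: (gen_comp_congr iJ (ideal0 (gen_comp_ideal iJ _ n))); rewrite ?subr0.
exact: (gen_comp_gen iJ (G := init_forms J I) (p := (n, y))).
Qed.

Lemma in_compP n x : Q n x -> add_id (isect (ipow J n) I) (ipow J n.+1) x.
Proof.
case/gen_compE => _; apply: add_id_mono => //.
apply: hom_comb_min; first exact/isect_ideal/iI/ipow_ideal.
move=> p a [Ip [Jp _]] le Ja; split; last exact: idealM.
by rewrite -(subnK le); apply: ipowD.
Qed.

Lemma hom_gens_in_comp S : (forall p, S p -> isect (ipow J p.1) I p.2) ->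
  (forall n, subid (isect (ipow J n) I) (gen_comp J S n)) -> hom_gens J Q S.
Proof.
move=> SI IS; split => [p /SI [] // | p /SI /in_comp_isect // | n x]; split.
  by apply: gen_comp_trans => // p [Ip [Jp _]]; apply: IS.
by apply: gen_comp_trans => // p /SI /in_comp_isect.
Qed.

Lemma in_comp_fin_gens c : noetherian R -> ar_cond J I c ->
  exists s : seq (nat * R), hom_gens J Q (fun p => p \in s).
Proof.
move=> noeR ARc.
have [t Ht] : exists t : nat -> seq R, forall k, seteq (isect (ipow J k) I) (gen_by (t k)).
  apply: (functional_choice (fun k t => seteq (isect (ipow J k) I) (gen_by t))) => k.
  exact/noeR/isect_ideal/iI/ipow_ideal.
pose s := flatten [seq [seq (k, g) | g <- t k] | k <- iota 0 c.+1].
have sI p : p \in s -> isect (ipow J p.1) I p.2.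
  case/flattenP => _ /mapP [k _ ->] /mapP [g gt ->]; exact/Ht/gen_by_mem.
have low e : (e <= c)%N -> subid (isect (ipow J e) I) (gen_comp J (fun p => p \in s) e).
  move=> le_ec f /Ht; apply: gen_by_min; first exact: gen_comp_ideal.
  move=> g gt; have es : (e, g) \in s.
    apply/flattenP; exists [seq (e, g) | g <- t e]; last exact: map_f.
    by apply: (map_f (fun k => [seq (k, g) | g <- t k])); rewrite mem_iota.
  by apply: (gen_comp_gen iJ (p := (e, g))) => //; case: (sI _ es).
exists s; apply: hom_gens_in_comp => // n x Mx; case: (leqP n c) => [le_nc|lt_cn].
  exact: low.
move/(ARc n (ltnW lt_cn)): Mx; apply: prod_id_min; first exact: gen_comp_ideal.
by move=> u v Ju /(low c (leqnn c)); rewrite -(subnK (ltnW lt_cn)); apply: gen_compM.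
Qed.

Lemma min_hom_gens_exists (s : seq (nat * R)) : hom_gens J Q (fun p => p \in s) ->
  exists S, min_hom_gens J Q S.
Proof.
(* A generating list of minimal length is inclusion-minimal: a smaller generating
   subset could be cut out of it by filtering. *)
move=> gens_s.
pose P n := exists t : seq (nat * R), hom_gens J Q (fun p => p \in t) /\ size t = n.
have [_ [[t [gens_t <-]] tmin]] := ex_min_nat (ex_intro P _ (ex_intro _ s (conj gens_s erefl))).
exists (fun p => p \in t); split => // S' S't [p [pt nS'p]] gens_S'.
have [b bP] : exists b : nat * R -> bool, forall q, b q <-> S' q.
  apply: (functional_choice (fun q (b : bool) => b <-> S' q)) => q.
  by case: (classic (S' q)) => [S'q | nS'q]; [exists true | exists false].
have gens_tb : hom_gens J Q (fun q => q \in filter b t).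
  case: gens_S' => [hS' S'Q S'E]; split => [q|q|n x].
  - by rewrite mem_filter => /andP [/bP /hS'].
  - by rewrite mem_filter => /andP [/bP /S'Q].
  - rewrite S'E; split; apply: gen_comp_subset => q; rewrite mem_filter.
      by move=> S'q _; apply/andP; split; [apply/bP | apply: S't].
    by move=> /andP [/bP].
have := tmin _ (ex_intro _ _ (conj gens_tb erefl)).
rewrite leqNgt => /negP; apply; rewrite size_filter -[X in (_ < X)%N](count_predC b).
rewrite -[X in (X < _)%N]addn0 ltn_add2l -has_count.
by apply/hasP; exists p => //=; apply/negP => /bP.
Qed.

Lemma hom_gens_drop S p : hom_gens J Q S -> gen_comp J (fun q => S q /\ q <> p) p.1 p.2 ->
  hom_gens J Q (fun q => S q /\ q <> p).
Proof.
move=> [hS SQ SE] pS'; split => [q [/hS] // | q [/SQ] // | n x].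
rewrite SE; split; last by apply: gen_comp_subset => q [].
apply: (gen_comp_trans iJ) => q Sq; case: (classic (q = p)) => [->|neq] //.
by apply: (gen_comp_gen iJ (G := fun q => S q /\ q <> p)) => //; apply: hS.
Qed.

Lemma min_hom_gens_deg_le c S p : ar_cond J I c -> min_hom_gens J Q S -> S p -> (p.1 <= c)%N.
Proof.
move=> ARc [gensS Smin] Sp; have [hS SQ SE] := gensS.
rewrite leqNgt; apply/negP => lt_cp; have le_cp := ltnW lt_cp.
apply: (Smin (fun q => S q /\ q <> p)); [by move=> q [] | by exists p; split => // -[] |].
apply: hom_gens_drop => //; have [y [c' [My Jc' ep]]] := in_compP (SQ p Sp).
rewrite ep; apply: (gen_comp_congr iJ (y := y)); first last.
- by rewrite addrC addKr.
- by rewrite -ep; apply: hS.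
move: My => /(ARc _ le_cp); apply: prod_id_min; first exact: gen_comp_ideal.
move=> u v Ju /in_comp_isect /SE Sv; rewrite -(subnK le_cp); apply: gen_compM => //.
move: Sv; apply: gen_comp_subset => q Sq le_qc; split => // qp.
by move: le_qc; rewrite qp leqNgt lt_cp.
Qed.

Lemma hom_gens_graded_ar_cond S d : hom_gens J Q S -> (forall p, S p -> (p.1 <= d)%N) ->
  graded_ar_cond J I d.
Proof.
move=> [hS SQ SE] Sd m le_dm x [Jx Ix].
have /gen_compE [_ [y [c [Sy Jc ex]]]] := (SE m x).1 (in_comp_isect (conj Jx Ix)).
have [k [z [Kk Jz ey]]] : add_id (ar_rhs J I m d) (ipow J m.+1) y.
  move: Sy; apply: hom_comb_min.
    exact: add_id_ideal (ar_rhs_ideal I iJ m d) (ipow_ideal iJ _).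
  move=> p a Sp le_pm Ja; have [h [e [[Jh Ih] Je ->]]] := in_compP (SQ p Sp).
  exists (a * h), (a * e); split; [exact: ar_rhs_mul (Sd p Sp) le_dm Ja Jh Ih | | ring].
  by rewrite -(subnK le_pm) -addnS; apply: ipowD.
exists k, (z + c); split; [done | split | by rewrite ex ey addrA].
  exact: idealD (ipow_ideal iJ _) Jz Jc.
have -> : z + c = x - k by rewrite ex ey; ring.
by apply: idealB Ix _; have [] := ar_rhs_sub iJ iI le_dm Kk.
Qed.

Lemma min_hom_gens_deg_max c S : noetherian R -> local_ring R -> is_ar_number J I c ->
  min_hom_gens J Q S -> c = 0%N \/ exists p, S p /\ p.1 = c.
Proof.
move=> noeR locR [ARc cmin] minS.
case: (classic (exists p, S p /\ p.1 = c)) => [|nomax]; [by right | left].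
case: c ARc cmin nomax => [//|d] ARc cmin nomax; exfalso.
have Sd p : S p -> (p.1 <= d)%N.
  move=> Sp; have := min_hom_gens_deg_le ARc minS Sp; rewrite leq_eqVlt => /predU1P [pd|//].
  by case: nomax; exists p.
suff /cmin : ar_cond J I d by rewrite ltnn.
case: (classic (J 1)) => [J1|nJ1]; first exact: ar_cond_full.
by apply: ar_cond_of_graded => //; apply: hom_gens_graded_ar_cond minS.1 Sd.
Qed.

End InitialIdeal.

Theorem proposition2p3 (R : comNzRingType) (I J : R -> Prop) :
  noetherian R -> local_ring R -> ideal I -> ideal J ->
  exists c : nat, is_ar_number J I c /\ d_is J (in_comp J I) c.
Proof.
move=> noeR locR iI iJ.
have [c [ARc cmin]] := ex_min_nat (artin_rees iJ iI noeR).
exists c; split; first by split.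
split.
  have [s gens_s] := in_comp_fin_gens iJ iI noeR ARc.
  exact: min_hom_gens_exists gens_s.
move=> S minS; split; first by move=> p; apply: (min_hom_gens_deg_le iJ iI ARc minS).
exact: (min_hom_gens_deg_max iJ iI noeR locR (conj ARc cmin) minS).
Qed.
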